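(* There exists $\lambda_0\ge 0$ such that for every $\lambda\ge\lambda_0$, the cross-group ordering $o=O(n^a,n^b)$ output by the xOrder procedure with parameter $\lambda$ satisfies $$\Delta\mathrm{xAUC}^o\le\max\left(\frac{1}{n_1^a},\frac{1}{n_1^b}\right).$$
   Context: Setting: two disjoint finite groups $a,b$ of instances with labels $Y_u\in\{0,1\}$; $n^g,n^g_1,n^g_0$ denote the size, number of positives and number of negatives of group $g$ (all counts $\ge1$); $n_1=n_1^a+n_1^b$, $n_0=n_0^a+n_0^b$, $k_{a,b}=n_1^an_0^b$, $k_{b,a}=n_0^an_1^b$, $k=n_0n_1$. $\mathrm{p}^a=(\mathrm{p}^{a(1)},\dots,\mathrm{p}^{a(n^a)})$ and $\mathrm{p}^b=(\mathrm{p}^{b(1)},\dots,\mathrm{p}^{b(n^b)})$ are fixed orderings of the groups. A cross-group ordering is a list of all instances of $a\cup b$ preserving the relative orders within $\mathrm{p}^a$ and within $\mathrm{p}^b$; ''precedes'' means ranked higher. $\mathrm{xAUC}^o(a,b)=\frac{1}{n_1^an_0^b}\#\{(u,v):u\in a,Y_u=1,v\in b,Y_v=0,u\text{ precedes }v\text{ in }o\}$, $\mathrm{xAUC}^o(b,a)$ symmetrically; $\Delta\mathrm{xAUC}^o=|\mathrm{xAUC}^o(a,b)-\mathrm{xAUC}^o(b,a)|$. xOrder: For $0\le i\le n^a$, $0\le j\le n^b$ and a list $q$ interleaving $\mathrm{p}^{a(1)},\dots,\mathrm{p}^{a(i)}$ and $\mathrm{p}^{b(1)},\dots,\mathrm{p}^{b(j)}$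 with within-group orders preserved, let $q^{\to b}$ be $q$ followed by $\mathrm{p}^{b(j+1)},\dots,\mathrm{p}^{b(n^b)}$ and $q^{\to a}$ be $q$ followed by $\mathrm{p}^{a(i+1)},\dots,\mathrm{p}^{a(n^a)}$. Define $A(q)=\frac{1}{n_1^an_0^b}\#\{(u,v): u\in\{\mathrm{p}^{a(1)},..,\mathrm{p}^{a(i)}\},Y_u=1,v\in b,Y_v=0,u\text{ precedes }v\text{ in }q^{\to b}\}$, $B(q)=\frac{1}{n_1^bn_0^a}\#\{(u,v): u\in\{\mathrm{p}^{b(1)},..,\mathrm{p}^{b(j)}\},Y_u=1,v\in a,Y_v=0,u\text{ precedes }v\text{ in }q^{\to a}\}$, and $\widehat G(q)=\frac{k_{a,b}}{k}A(q)+\frac{k_{b,a}}{k}B(q)-\lambda|A(q)-B(q)|$. Set $O(i,0)=(\mathrm{p}^{a(1)},\dots,\mathrm{p}^{a(i)})$, $O(0,j)=(\mathrm{p}^{b(1)},\dots,\mathrm{p}^{b(j)})$. For $i=1,\dots,n^a$, $j=1,\dots,n^b$ (in increasing order): if $\widehat G(O(i-1,j)\oplus\mathrm{p}^{a(i)})>\widehat G(O(i,j-1)\oplus\mathrm{p}^{b(j)})$ then $O(i,j)=O(i-1,j)\oplus\mathrm{p}^{a(i)}$, otherwise $O(i,j)=O(i,j-1)\oplus\mathrm{p}^{b(j)}$ ($\oplus$ appends an element to the end of a list). The output is $O(n^a,n^b)$. *)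

From HB Require Import structures.
From mathcomp Require Import all_boot all_order all_algebra.
From mathcomp Require Import reals.
Set Implicit Arguments. Unset Strict Implicit. Unset Printing Implicit Defensive.
Import Order.TTheory GRing.Theory Num.Theory.
Local Open Scope ring_scope.

(* Group a is given by its fixed ordering p^a, recorded as the list of labels
   la : seq bool (la`_i = Y of p^{a(i+1)}, true = positive); likewise lb for b.
   Instances are identified with their positions in p^a / p^b.
   A list interleaving p^{a(1..i)} and p^{b(1..j)} preserving within-group
   orders is encoded as s : seq bool with count id s = i trues and
   count negb s = j falses: the k-th entry of the list is the next unused
   element of a if s`_k = true, and of b otherwise. *)

(* position (0-based) of the (i+1)-th a-element, i.e. of p^{a(i+1)}, in s *)
Fixpoint posA (s : seq bool) (i : nat) : nat :=
  match s with
  | [::] => 0%N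
  | true :: s' => if i is i'.+1 then (posA s' i').+1 else 0%N
  | false :: s' => (posA s' i).+1
  end.

(* position (0-based) of p^{b(j+1)} in s *)
Fixpoint posB (s : seq bool) (j : nat) : nat :=
  match s with
  | [::] => 0%N
  | false :: s' => if j is j'.+1 then (posB s' j').+1 else 0%N
  | true :: s' => (posB s' j).+1
  end.

Definition n1 (l : seq bool) : nat := count id l.
Definition n0 (l : seq bool) : nat := count negb l.

Definition cntAB (la lb : seq bool) (s : seq bool) (ia : nat) : nat :=
  \sum_(i < ia) \sum_(j < size lb)
     [&& nth false la i, ~~ nth true lb j & (posA s i < posB s j)%N].

Definition cntBA (la lb : seq bool) (s : seq bool) (jb : nat) : nat :=
  \sum_(j < jb) \sum_(i < size la)
     [&& nth false lb j, ~~ nth true la i & (posB s j < posA s i)%N].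

Section XAUC.
Variable R : realType.

Definition xAUC_ab (la lb o : seq bool) : R :=
  (cntAB la lb o (size la))%:R / ((n1 la)%:R * (n0 lb)%:R).
Definition xAUC_ba (la lb o : seq bool) : R :=
  (cntBA la lb o (size lb))%:R / ((n1 lb)%:R * (n0 la)%:R).
Definition dxAUC (la lb o : seq bool) : R :=
  `|xAUC_ab la lb o - xAUC_ba la lb o|.

Definition compB (lb q : seq bool) : seq bool :=
  q ++ nseq (size lb - count negb q) false.
Definition compA (la q : seq bool) : seq bool :=
  q ++ nseq (size la - count id q) true.

Definition Aq (la lb q : seq bool) : R :=
  (cntAB la lb (compB lb q) (count id q))%:R / ((n1 la)%:R * (n0 lb)%:R).
Definition Bq (la lb q : seq bool) : R :=
  (cntBA la lb (compA la q) (count negb q))%:R / ((n1 lb)%:R * (n0 la)%:R).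

Definition Ghat (lam : R) (la lb q : seq bool) : R :=
  let kab := ((n1 la) * (n0 lb))%:R in
  let kba := ((n0 la) * (n1 lb))%:R in
  let k := ((n0 la + n0 lb) * (n1 la + n1 lb))%:R in
  kab / k * Aq la lb q + kba / k * Bq la lb q
  - lam * `|Aq la lb q - Bq la lb q|.

Fixpoint xO (lam : R) (la lb : seq bool) (i j : nat) : seq bool :=
  match i with
  | 0%N => nseq j false
  | i'.+1 =>
    (fix go (j : nat) : seq bool :=
       match j with
       | 0%N => nseq i true
       | j'.+1 =>
         let x := rcons (xO lam la lb i' j) true in
         let y := rcons (go j') false in
         if Ghat lam la lb y < Ghat lam la lb x then x else y
       end) j
  end.

Definition xOrder (lam : R) (la lb : seq bool) : seq bool :=
  xO lam la lb (size la) (size lb).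

End XAUC.

From Pilot Require Import Defs.
From HB Require Import structures.
From mathcomp Require Import all_boot all_order all_algebra.
From mathcomp Require Import reals.
From mathcomp Require Import lra ring.
Set Implicit Arguments. Unset Strict Implicit. Unset Printing Implicit Defensive.
Import Order.TTheory GRing.Theory Num.Theory.

(* Write D(q) = A(q) - B(q). Appending the next element of a at grid cell
   (i, j) (i elements of a and j of b already placed) raises D by an amount
   a(i, j) depending only on the cell, and appending from b lowers it by some
   b(i, j). The two ways from (i, j) to (i+1, j+1) end at values differing by
   at most M = max(1/n_1^a, 1/n_1^b), since at most one of the two new
   cross pairs can put a positive above a negative.
   |D| is a multiple of 1/K for a fixed K and the accuracy part of G^ is
   bounded, so for large λ xOrder takes at each cell the candidate with smaller
   |D|. Along such a greedy walk D exceeds M only right after an a-step, and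
   a-steps vanish on the last column, so D <= M there; symmetrically D >= -M on
   the last row, and ΔxAUC of the output is |D| at the corner. *)

(** * Positions in interleavings *)

Lemma count_rcons (T : Type) (p : pred T) s x : count p (rcons s x) = (count p s + p x)%N.
Proof. by rewrite -cats1 count_cat /= addn0. Qed.

Lemma nseqS_rcons (T : Type) n (x : T) : nseq n.+1 x = rcons (nseq n x) x.
Proof. by elim: n => //= n ->. Qed.

Lemma count_id_map_negb (s : seq bool) : count id (map negb s) = count negb s.
Proof. by rewrite count_map. Qed.

Lemma count_negb_map_negb (s : seq bool) : count negb (map negb s) = count id s.
Proof. by rewrite count_map; apply: eq_count => x /=; rewrite negbK. Qed.

Lemma posB_posA (s : seq bool) j : posB s j = posA (map negb s) j.
Proof. by elim: s j => [|[] s IH] [|j] //=; rewrite IH. Qed.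

Lemma posA_posB (s : seq bool) i : posA s i = posB (map negb s) i.
Proof. by elim: s i => [|[] s IH] [|i] //=; rewrite IH. Qed.

Lemma posA_cat (s1 s2 : seq bool) i :
  posA (s1 ++ s2) i = if (i < count id s1)%N then posA s1 i
                      else (size s1 + posA s2 (i - count id s1))%N.
Proof.
elim: s1 i => [|[] s1 IH] i /=; first by rewrite subn0.
- by case: i => [|i] //=; rewrite IH add1n ltnS subSS; case: ifP.
- by rewrite IH add0n; case: ifP.
Qed.

Lemma posB_cat (s1 s2 : seq bool) j :
  posB (s1 ++ s2) j = if (j < count negb s1)%N then posB s1 j
                      else (size s1 + posB s2 (j - count negb s1))%N.
Proof. by rewrite !posB_posA map_cat posA_cat count_id_map_negb size_map. Qed.

Lemma posA_lt_size (s : seq bool) i : (i < count id s)%N -> (posA s i < size s)%N.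
Proof.
elim: s i => [|[] s IH] i //=; last by move=> /IH.
by case: i => [|i] //= /IH.
Qed.

Lemma posB_lt_size (s : seq bool) j : (j < count negb s)%N -> (posB s j < size s)%N.
Proof. by rewrite posB_posA -count_id_map_negb -(size_map negb); apply: posA_lt_size. Qed.

Definition negs_from (l : seq bool) (j : nat) : nat := count negb (drop j l).

Lemma negs_fromE (l : seq bool) j :
  negs_from l j = (\sum_(k < size l) ((j <= k)%N && ~~ nth true l k))%N.
Proof.
rewrite /negs_from; elim: l j => [|x l IH] j /=; first by rewrite big_ord0.
rewrite big_ord_recl /=; case: j => [|j] /=.
  by have := IH 0%N; rewrite drop0 => ->.
by rewrite add0n IH.
Qed.

Lemma negs_fromS (l : seq bool) j :
  negs_from l j = (negs_from l j.+1 + ~~ nth true l j)%N.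
Proof.
rewrite /negs_from; case: (ltnP j (size l)) => [lt_jl|le_lj].
  by rewrite (drop_nth true lt_jl) /= addnC.
by rewrite !drop_oversize ?(leq_trans le_lj) // nth_default.
Qed.

Lemma negs_from_size (l : seq bool) : negs_from l (size l) = 0%N.
Proof. by rewrite /negs_from drop_size. Qed.

(* Appending p^{a(i+1)} creates exactly the pairs it forms with the negatives
   of b that are not yet placed. *)
Lemma cntAB_rcons_true (la lb q : seq bool) :
  cntAB la lb (compB lb (rcons q true)) (count id q).+1 =
  (cntAB la lb (compB lb q) (count id q)
   + nth false la (count id q) * negs_from lb (count negb q))%N.
Proof.
rewrite /cntAB /compB big_ord_recr /= count_rcons addn0 cat_rcons.
set c := count id q; set d := count negb q.
congr (_ + _)%N.
  apply: eq_bigr => i _; apply: eq_bigr => j _.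
  rewrite !posA_cat !posB_cat ltn_ord -/c -/d; case: ifP => // _.
  by rewrite !(leq_trans (posA_lt_size (ltn_ord i))) ?leq_addr.
rewrite posA_cat ltnn subnn /= addn0.
case: (nth false la c); last by rewrite mul0n big1.
rewrite mul1n negs_fromE; apply: eq_bigr => j _.
rewrite posB_cat -/d andTb; case: ifP => lt_jd.
  by rewrite ltnNge ltnW ?posB_lt_size // leqNgt lt_jd andbF.
by rewrite addnS ltnS leq_addr leqNgt lt_jd andbC.
Qed.

Local Open Scope ring_scope.

(** * How D = A - B changes when an element is appended *)

Lemma cntBA_swap la lb s jb : cntBA la lb s jb = cntAB lb la (map negb s) jb.
Proof.
rewrite /cntBA /cntAB; apply: eq_bigr => j _; apply: eq_bigr => i _.
by rewrite (posB_posA s) (posA_posB s).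
Qed.

Section IncrementsOfD.
Variable R : realType.

Definition Dq (la lb q : seq bool) : R := Aq R la lb q - Bq R la lb q.

Definition incA (la lb : seq bool) (i j : nat) : R :=
  (nth false la i * negs_from lb j)%:R / ((n1 la)%:R * (n0 lb)%:R).

Lemma Bq_swap la lb q : Bq R la lb q = Aq R lb la (map negb q).
Proof.
rewrite /Bq /Aq cntBA_swap count_id_map_negb /compB /Defs.compA.
by rewrite map_cat map_nseq count_negb_map_negb.
Qed.

Lemma Aq_rcons_true la lb q :
  Aq R la lb (rcons q true) = Aq R la lb q + incA la lb (count id q) (count negb q).
Proof. by rewrite /Aq count_rcons addn1 cntAB_rcons_true natrD mulrDl. Qed.

Lemma Aq_rcons_false la lb q : (count negb q < size lb)%N ->
  Aq R la lb (rcons q false) = Aq R la lb q.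
Proof.
move=> lt_q_lb; rewrite /Aq /compB !count_rcons /= addn0 addn1 cat_rcons.
by rewrite -(subnSK lt_q_lb).
Qed.

Lemma Dq_rcons_true la lb q : (count id q < size la)%N ->
  Dq la lb (rcons q true) = Dq la lb q + incA la lb (count id q) (count negb q).
Proof.
move=> lt_q_la; rewrite /Dq Aq_rcons_true !Bq_swap map_rcons /=.
by rewrite Aq_rcons_false ?count_negb_map_negb // addrAC.
Qed.

Lemma Dq_rcons_false la lb q : (count negb q < size lb)%N ->
  Dq la lb (rcons q false) = Dq la lb q - incA lb la (count negb q) (count id q).
Proof.
move=> lt_q_lb; rewrite /Dq Aq_rcons_false // !Bq_swap map_rcons /=.
by rewrite Aq_rcons_true count_id_map_negb count_negb_map_negb opprD addrA.
Qed.

Lemma incA_ge0 la lb i j : 0 <= incA la lb i j.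
Proof. by rewrite divr_ge0 ?mulr_ge0 ?ler0n. Qed.

Lemma incA_last la lb i : incA la lb i (size lb) = 0.
Proof. by rewrite /incA negs_from_size muln0 mul0r. Qed.

Lemma incA_subS la lb i j : incA la lb i j - incA la lb i j.+1 =
  (nth false la i && ~~ nth true lb j)%:R / ((n1 la)%:R * (n0 lb)%:R).
Proof. by rewrite /incA negs_fromS mulnDr natrD mulrDl addrAC subrr add0r mulnb. Qed.

End IncrementsOfD.

Lemma nth_false_true (s : seq bool) i : nth false s i -> nth true s i.
Proof. by elim: s i => [|x s IH] [|i] //=; apply: IH. Qed.

Lemma bool_frac_le (R : realFieldType) (c : bool) (n m : nat) : (0 < n)%N -> (0 < m)%N ->
  0 <= (c%:R / (n%:R * m%:R) : R) <= 1 / n%:R.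
Proof.
move=> n_gt0 m_gt0; rewrite divr_ge0 ?mulr_ge0 ?ler0n //= ler_pdivrMr ?mulr_gt0 ?ltr0n //.
rewrite mul1r mulrA mulVf ?pnatr_eq0 -?lt0n // mul1r ler_nat.
by case: c.
Qed.

Lemma incA_exchange (R : realType) la lb i j :
  (0 < n1 la)%N -> (0 < n0 la)%N -> (0 < n1 lb)%N -> (0 < n0 lb)%N ->
  0 <= (incA R la lb i j - incA R la lb i j.+1) + (incA R lb la j i - incA R lb la j i.+1)
    <= Num.max (1 / (n1 la)%:R) (1 / (n1 lb)%:R).
Proof.
move=> n1a n0a n1b n0b; rewrite !incA_subS.
case: (boolP (nth false la i)) => [la_i|_] /=.
  rewrite (nth_false_true la_i) andbF mul0r addr0.
  have /andP[-> le1] := bool_frac_le R (~~ nth true lb j) n1a n0b.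
  by rewrite le_max le1.
rewrite mul0r add0r.
have /andP[-> le1] := bool_frac_le R (nth false lb j && ~~ nth true la i) n1b n0a.
by rewrite le_max le1 orbT.
Qed.

(** * Greedy walks on a grid *)

Lemma grid_ind (m n : nat) (P : nat -> nat -> Prop) :
  (forall i j, (i < m)%N -> (j < n)%N ->
     (0 < j -> P i j.-1)%N -> (0 < i -> P i.-1 j)%N -> P i j) ->
  forall i j, (i < m)%N -> (j < n)%N -> P i j.
Proof.
move=> step; elim=> [|i IHi] j lt_im; elim: j => [|j IHj] lt_jn;
  apply: step => // _; first [exact: IHj (ltnW lt_jn) | exact: IHi (ltnW lt_im) lt_jn].
Qed.

(* D i j is the value reached with i elements of a and j elements of b placed;
   a i j (resp. b i j) is the increase (resp. decrease) of D caused by placing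
   the next element of a (resp. b) there. *)
Section GreedyGrid.
Variables (R : realDomainType) (D a b : nat -> nat -> R) (na nb : nat) (M : R).
Hypotheses (M_ge0 : 0 <= M) (D00 : D 0 0 = 0).
Hypotheses (a_ge0 : forall i j, 0 <= a i j) (b_ge0 : forall i j, 0 <= b i j).
Hypothesis exchange : forall i j, 0 <= (a i j - a i j.+1) + (b i j - b i.+1 j) <= M.
Hypotheses (a_last : forall i, a i nb = 0) (b_last : forall j, b na j = 0).
Hypothesis D_i0S : forall i, (i < na)%N -> D i.+1 0 = D i 0 + a i 0.
Hypothesis D_0jS : forall j, (j < nb)%N -> D 0 j.+1 = D 0 j - b 0 j.

Definition via_a i j := D i j.+1 + a i j.+1.
Definition via_b i j := D i.+1 j - b i.+1 j.

Hypothesis D_greedy : forall i j, (i < na)%N -> (j < nb)%N ->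
  D i.+1 j.+1 = via_a i j /\ `|via_a i j| <= `|via_b i j| \/
  D i.+1 j.+1 = via_b i j /\ `|via_b i j| <= `|via_a i j|.

Lemma between_of_ordered i j : (i < na)%N -> (j < nb)%N ->
  D i j + a i j <= D i.+1 j -> D i j.+1 <= D i j - b i j ->
  via_a i j <= D i.+1 j.+1 <= via_b i j.
Proof.
move=> lt_ina lt_jnb L U.
have ab : via_a i j <= via_b i j.
  by have /andP[ex _] := exchange i j; rewrite /via_a /via_b; lra.
by case: (D_greedy lt_ina lt_jnb) => [[-> _]|[-> _]]; rewrite ab lexx.
Qed.

Lemma steps_ordered : forall i j, (i < na)%N -> (j < nb)%N ->
  D i j + a i j <= D i.+1 j /\ D i j.+1 <= D i j - b i j.
Proof.
apply: grid_ind => i j lt_ina lt_jnb left up; split.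
- case: j lt_jnb left up => [|j] lt_jnb left _; first by rewrite D_i0S.
  have [L U] := left isT.
  by have /andP[] := between_of_ordered lt_ina (ltnW lt_jnb) L U.
- case: i lt_ina left up => [|i] lt_ina _ up; first by rewrite D_0jS.
  have [L U] := up isT.
  by have /andP[] := between_of_ordered (ltnW lt_ina) lt_jnb L U.
Qed.

Lemma D_between i j : (i < na)%N -> (j < nb)%N ->
  via_a i j <= D i.+1 j.+1 <= via_b i j.
Proof.
by move=> lt_ina lt_jnb; have [] := steps_ordered lt_ina lt_jnb; apply: between_of_ordered.
Qed.

Definition straddles i j := via_a i j < - M /\ M < via_b i j.

Lemma above_via_a i j : (i < na)%N -> (j < nb)%N -> ~ straddles i j ->
  M < D i.+1 j.+1 -> D i.+1 j.+1 = via_a i j.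
Proof.
move=> lt_ina lt_jnb nst hM; have /andP[xD Dy] := D_between lt_ina lt_jnb.
case: (D_greedy lt_ina lt_jnb) => [[//]|[eD]].
rewrite -eD (gtr0_norm (le_lt_trans M_ge0 hM)).
have [x_ge0|x_lt0] := lerP 0 (via_a i j).
  by rewrite ger0_norm // => Dx; apply/eqP; rewrite eq_le Dx.
by rewrite ltr0_norm // => Dx; exfalso; apply: nst; split; lra.
Qed.

Lemma below_via_b i j : (i < na)%N -> (j < nb)%N -> ~ straddles i j ->
  D i.+1 j.+1 < - M -> D i.+1 j.+1 = via_b i j.
Proof.
move=> lt_ina lt_jnb nst hM; have /andP[xD Dy] := D_between lt_ina lt_jnb.
have D_lt0 : D i.+1 j.+1 < 0 by have := M_ge0; lra.
case: (D_greedy lt_ina lt_jnb) => [[eD]|[//]].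
rewrite -eD (ltr0_norm D_lt0).
have [y_ge0|y_lt0] := lerP 0 (via_b i j).
  by rewrite ger0_norm // => Dy'; exfalso; apply: nst; split; lra.
by rewrite ltr0_norm // => yD; apply/eqP; rewrite eq_le Dy; lra.
Qed.

(* At a straddling cell both neighbours would have been reached directly from
   (i, j), so its two candidates would differ by the exchange term, which is
   at most M < 2M. *)
Lemma no_straddle : forall i j, (i < na)%N -> (j < nb)%N -> ~ straddles i j.
Proof.
apply: grid_ind => i j lt_ina lt_jnb left up [x_lt y_gt].
have Da : D i.+1 j = D i j + a i j.
  case: j lt_jnb left up x_lt y_gt => [|j] lt_jnb left _ x_lt y_gt; first exact: D_i0S.
  apply: above_via_a => //; first exact: ltnW.
    exact: left.
  by move: y_gt; rewrite /via_b; have := b_ge0 i.+1 j.+1; lra.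
have Db : D i j.+1 = D i j - b i j.
  case: i lt_ina left up x_lt y_gt Da => [|i] lt_ina _ up x_lt y_gt Da; first exact: D_0jS.
  apply: below_via_b => //; first exact: ltnW.
    exact: up.
  by move: x_lt; rewrite /via_a; have := a_ge0 i.+1 j.+1; lra.
have /andP[_ ex] := exchange i j.
by move: x_lt y_gt; rewrite /via_a /via_b Da Db; have := M_ge0; lra.
Qed.

Lemma D_first_row_le0 j : (j <= nb)%N -> D 0 j <= 0.
Proof.
elim: j => [|j IH] le_jnb; first by rewrite D00.
by rewrite D_0jS //; have := IH (ltnW le_jnb); have := b_ge0 0 j; lra.
Qed.

Lemma D_first_col_ge0 i : (i <= na)%N -> 0 <= D i 0.
Proof.
elim: i => [|i IH] le_ina; first by rewrite D00.
by rewrite D_i0S //; have := IH (ltnW le_ina); have := a_ge0 i 0; lra.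
Qed.

Lemma D_last_col_le i : (i <= na)%N -> D i nb <= M.
Proof.
elim: i => [|i IH] le_ina.
  by have := D_first_row_le0 (leqnn nb); have := M_ge0; lra.
rewrite leNgt; apply/negP => hM.
suff eD : D i.+1 nb = D i nb by have := IH (ltnW le_ina); lra.
case E : nb hM a_last => [|j] hM a_last'.
  by rewrite D_i0S // a_last' addr0.
have lt_jnb : (j < nb)%N by rewrite E.
by rewrite (above_via_a le_ina lt_jnb (no_straddle le_ina lt_jnb) hM) /via_a a_last' addr0.
Qed.

Lemma D_last_row_ge j : (j <= nb)%N -> - M <= D na j.
Proof.
elim: j => [|j IH] le_jnb.
  by have := D_first_col_ge0 (leqnn na); have := M_ge0; lra.
rewrite leNgt; apply/negP => hM.
suff eD : D na j.+1 = D na j by have := IH (ltnW le_jnb); lra.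
case E : na hM b_last => [|i] hM b_last'.
  by rewrite D_0jS // b_last' subr0.
have lt_ina : (i < na)%N by rewrite E.
by rewrite (below_via_b lt_ina le_jnb (no_straddle lt_ina le_jnb) hM) /via_b b_last' subr0.
Qed.

Lemma greedy_grid_bound : `|D na nb| <= M.
Proof. by rewrite ler_norml D_last_row_ge // D_last_col_le. Qed.

End GreedyGrid.

(** * For large λ the greedy step of xOrder minimises |D| *)

(* u < v forces v - u >= 1/K, and then the penalty outweighs any difference
   of the accuracy terms s, t. *)
Lemma le_of_penalized_le (R : realFieldType) (C K lam s t u v : R) (m n : nat) :
  0 < K -> C * K < lam -> 0 <= s <= C -> 0 <= t <= C ->
  u * K = m%:R -> v * K = n%:R -> s - lam * u <= t - lam * v -> v <= u.
Proof.
move=> K_gt0 CK_lt /andP[s_ge0 s_le] /andP[t_ge0 t_le] uK vK pen.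
rewrite leNgt; apply/negP => lt_uv.
have lt_mn : (m < n)%N by rewrite -(ltr_nat R) -uK -vK ltr_pM2r.
have gap_ge1 : 1 <= (v - u) * K.
  by rewrite mulrBl uK vK -natrB ?(ltnW lt_mn) // ler1n subn_gt0.
have C_ge0 : 0 <= C := le_trans s_ge0 s_le.
have CK_ge0 : 0 <= C * K by rewrite mulr_ge0 // ltW.
have lam_ge0 : 0 <= lam by lra.
have : lam * ((v - u) * K) <= C * K.
  by rewrite mulrA; apply: ler_wpM2r; [exact: ltW | rewrite mulrBr; lra].
have : lam <= lam * ((v - u) * K) by rewrite ler_peMr.
lra.
Qed.

Section Accuracy.
Variable R : realType.

Definition wA (la lb : seq bool) : R :=
  (n1 la * n0 lb)%:R / ((n0 la + n0 lb) * (n1 la + n1 lb))%:R.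
Definition wB (la lb : seq bool) : R :=
  (n0 la * n1 lb)%:R / ((n0 la + n0 lb) * (n1 la + n1 lb))%:R.

Lemma wA_ge0 la lb : 0 <= wA la lb.
Proof. by rewrite divr_ge0 ?ler0n. Qed.

Lemma wB_ge0 la lb : 0 <= wB la lb.
Proof. by rewrite divr_ge0 ?ler0n. Qed.

Definition accq (la lb q : seq bool) : R := wA la lb * Aq R la lb q + wB la lb * Bq R la lb q.

Lemma GhatE (lam : R) la lb q : Ghat lam la lb q = accq la lb q - lam * `|Dq R la lb q|.
Proof. by []. Qed.

Definition acc_bound (la lb : seq bool) : R := (wA la lb + wB la lb) * (size la * size lb)%:R.

Lemma acc_bound_ge0 la lb : 0 <= acc_bound la lb.
Proof. by rewrite mulr_ge0 ?addr_ge0 ?wA_ge0 ?wB_ge0. Qed.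

Lemma cntAB_le la lb s ia : (cntAB la lb s ia <= ia * size lb)%N.
Proof.
rewrite -[X in (_ <= X * _)%N]card_ord -sum_nat_const; apply: leq_sum => i _.
by rewrite -[X in (_ <= X)%N]card_ord -sum1_card; apply: leq_sum => j _; rewrite leq_b1.
Qed.

Lemma ler_divr_nat (c d : nat) : c%:R / d%:R <= c%:R :> R.
Proof.
case: d => [|d]; first by rewrite invr0 mulr0 ler0n.
by rewrite ler_pdivrMr ?ltr0n // ler_peMr ?ler0n // ler1n.
Qed.

Lemma Aq_bound la lb q : (count id q <= size la)%N ->
  0 <= Aq R la lb q <= (size la * size lb)%:R.
Proof.
move=> le_q_la; rewrite /Aq divr_ge0 ?mulr_ge0 ?ler0n //= -natrM.
apply: le_trans (ler_divr_nat _ _) _; rewrite ler_nat.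
by apply: leq_trans (cntAB_le _ _ _ _) _; rewrite leq_mul2r le_q_la orbT.
Qed.

Lemma Bq_bound la lb q : (count negb q <= size lb)%N ->
  0 <= Bq R la lb q <= (size la * size lb)%:R.
Proof. by move=> le_q_lb; rewrite Bq_swap mulnC Aq_bound ?count_id_map_negb. Qed.

Lemma accq_bound la lb q : (count id q <= size la)%N -> (count negb q <= size lb)%N ->
  0 <= accq la lb q <= acc_bound la lb.
Proof.
move=> le_q_la le_q_lb; rewrite /accq /acc_bound mulrDl.
have /andP[A_ge0 A_le] := Aq_bound lb le_q_la.
have /andP[B_ge0 B_le] := Bq_bound la le_q_lb.
have wA_ge0 := wA_ge0 la lb; have wB_ge0 := wB_ge0 la lb.
rewrite (addr_ge0 (mulr_ge0 wA_ge0 A_ge0) (mulr_ge0 wB_ge0 B_ge0)) /=.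
exact: lerD (ler_wpM2l wA_ge0 A_le) (ler_wpM2l wB_ge0 B_le).
Qed.

Definition denom (la lb : seq bool) : R := (n1 la * n0 lb * (n1 lb * n0 la))%:R.

Lemma Dq_denom_nat la lb q :
  (0 < n1 la)%N -> (0 < n0 la)%N -> (0 < n1 lb)%N -> (0 < n0 lb)%N ->
  exists m : nat, `|Dq R la lb q| * denom la lb = m%:R.
Proof.
move=> n1a n0a n1b n0b.
pose z : int := (cntAB la lb (compB lb q) (count id q) * (n1 lb * n0 la))%:Z
              - (cntBA la lb (Defs.compA la q) (count negb q) * (n1 la * n0 lb))%:Z.
have zE : Dq R la lb q * denom la lb = z%:~R.
  rewrite intrB /Dq /Aq /Bq /denom -!pmulrn !natrM.
  by field; rewrite !pnatr_eq0 -!lt0n n1a n0a n1b n0b.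
exists `|z|%N; rewrite natr_absz intr_norm -zE normrM.
by rewrite (ger0_norm (ler0n _ _)).
Qed.

End Accuracy.


(** * The xOrder procedure *)

Section XOrderTrajectory.
Variables (R : realType) (lam : R) (la lb : seq bool).

Lemma xO_i0 i : xO lam la lb i 0 = nseq i true.
Proof. by case: i. Qed.

Lemma xO_0j j : xO lam la lb 0 j = nseq j false.
Proof. by []. Qed.

Lemma xO_SS i j : xO lam la lb i.+1 j.+1 =
  let x := rcons (xO lam la lb i j.+1) true in
  let y := rcons (xO lam la lb i.+1 j) false in
  if Ghat lam la lb y < Ghat lam la lb x then x else y.
Proof. by []. Qed.

Lemma xO_count i j : count id (xO lam la lb i j) = i /\ count negb (xO lam la lb i j) = j.
Proof.
elim: i j => [|i IHi] j; first by rewrite /= !count_nseq /= mul0n mul1n.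
elim: j => [|j IHj]; first by rewrite xO_i0 !count_nseq /= mul0n mul1n.
rewrite xO_SS /=; case: ifP => _; rewrite !count_rcons /= ?addn0 ?addn1.
  by have [-> ->] := IHi j.+1.
by have [-> ->] := IHj.
Qed.

End XOrderTrajectory.

Section XOrderGrid.
Variables (R : realType) (lam : R) (la lb : seq bool).
Hypotheses (n1a : (0 < n1 la)%N) (n0a : (0 < n0 la)%N).
Hypotheses (n1b : (0 < n1 lb)%N) (n0b : (0 < n0 lb)%N).
Hypothesis lam_large : acc_bound R la lb * denom R la lb < lam.

Definition Dgrid i j := Dq R la lb (xO lam la lb i j).

Lemma Dgrid_00 : Dgrid 0 0 = 0.
Proof. by rewrite /Dgrid /Dq /Aq /Bq /cntAB /cntBA !big_ord0 !mul0r subr0. Qed.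

Lemma Dgrid_i0S i : (i < size la)%N -> Dgrid i.+1 0 = Dgrid i 0 + incA R la lb i 0.
Proof.
move=> lt_ila; rewrite /Dgrid !xO_i0 nseqS_rcons Dq_rcons_true count_nseq /= ?mul1n //.
by rewrite count_nseq /= mul0n.
Qed.

Lemma Dgrid_0jS j : (j < size lb)%N -> Dgrid 0 j.+1 = Dgrid 0 j - incA R lb la j 0.
Proof.
move=> lt_jlb; rewrite /Dgrid !xO_0j nseqS_rcons Dq_rcons_false count_nseq /= ?mul1n //.
by rewrite count_nseq /= mul0n.
Qed.

Lemma Ghat_le_abs_Dq p q :
  (count id p <= size la)%N -> (count negb p <= size lb)%N ->
  (count id q <= size la)%N -> (count negb q <= size lb)%N ->
  Ghat lam la lb p <= Ghat lam la lb q -> `|Dq R la lb q| <= `|Dq R la lb p|.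
Proof.
move=> p_a p_b q_a q_b; rewrite !GhatE.
have [m Em] := Dq_denom_nat R q n1a n0a n1b n0b.
have [n En] := Dq_denom_nat R p n1a n0a n1b n0b.
apply: (le_of_penalized_le _ lam_large (accq_bound R p_a p_b) (accq_bound R q_a q_b) En Em).
by rewrite /denom ltr0n !muln_gt0 n1a n0a n1b n0b.
Qed.

Lemma Dgrid_greedy i j : (i < size la)%N -> (j < size lb)%N ->
  let x := via_a Dgrid (incA R la lb) i j in
  let y := via_b Dgrid (fun i j => incA R lb la j i) i j in
  Dgrid i.+1 j.+1 = x /\ `|x| <= `|y| \/ Dgrid i.+1 j.+1 = y /\ `|y| <= `|x|.
Proof.
move=> lt_ila lt_jlb x y.
have [ca cb] := xO_count lam la lb i j.+1.
have [ca' cb'] := xO_count lam la lb i.+1 j.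
have Dx : Dq R la lb (rcons (xO lam la lb i j.+1) true) = x.
  by rewrite Dq_rcons_true ca ?cb.
have Dy : Dq R la lb (rcons (xO lam la lb i.+1 j) false) = y.
  by rewrite Dq_rcons_false cb' ?ca'.
rewrite /Dgrid xO_SS /=; case: ifP => cmp; [left | right]; rewrite ?Dx ?Dy; split => //.
all: rewrite -Dx -Dy; apply: Ghat_le_abs_Dq; rewrite ?(ltW cmp) ?leNgt ?cmp //.
all: by rewrite count_rcons ?ca ?cb ?ca' ?cb' /= ?addn0 ?addn1.
Qed.

Lemma Dq_xOrder_bound :
  `|Dq R la lb (xOrder lam la lb)| <= Num.max (1 / (n1 la)%:R) (1 / (n1 lb)%:R).
Proof.
apply: (greedy_grid_bound (D := Dgrid) (a := incA R la lb) (b := fun i j => incA R lb la j i)).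
- by rewrite le_max divr_ge0 ?ler0n.
- exact: Dgrid_00.
- by move=> i j; apply: incA_ge0.
- by move=> i j; apply: incA_ge0.
- by move=> i j; apply: incA_exchange.
- by move=> i; apply: incA_last.
- by move=> j; apply: incA_last.
- exact: Dgrid_i0S.
- exact: Dgrid_0jS.
- exact: Dgrid_greedy.
Qed.

End XOrderGrid.

Lemma dxAUC_xOrder (R : realType) (lam : R) la lb :
  dxAUC R la lb (xOrder lam la lb) = `|Dq R la lb (xOrder lam la lb)|.
Proof.
have [ca cb] := xO_count lam la lb (size la) (size lb).
rewrite /dxAUC /Dq /xAUC_ab /xAUC_ba /Aq /Bq /compB /Defs.compA /xOrder ca cb.
by rewrite !subnn !cats0.
Qed.

Theorem theorem1 (R : realType) (la lb : seq bool) :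
  (0 < n1 la)%N -> (0 < n0 la)%N -> (0 < n1 lb)%N -> (0 < n0 lb)%N ->
  exists lam0 : R, 0 <= lam0 /\
    forall lam : R, lam0 <= lam ->
      dxAUC R la lb (xOrder lam la lb)
        <= Num.max (1 / (n1 la)%:R) (1 / (n1 lb)%:R).
Proof.
move=> n1a n0a n1b n0b.
have CK_ge0 : 0 <= acc_bound R la lb * denom R la lb by rewrite mulr_ge0 ?acc_bound_ge0 ?ler0n.
exists (acc_bound R la lb * denom R la lb + 1); split; first lra.
move=> lam le_lam; rewrite dxAUC_xOrder; apply: Dq_xOrder_bound => //; lra.
Qed.
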